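(* Let $\beta^*\approx1.5437$ be the real root of $x^3-2x^2+2x=2$. If $\beta\in(3/2,\beta^*]$, then $S_\beta$ has non-empty interior, and each hole of $S_\beta$ has the form $f_{\vec q_i}^n(H)$ for some $i\in\{0,1,2\}$ and some integer $n\ge0$.
   Context: $\vec q_0=(0,0)$, $\vec q_1=(1,0)$, $\vec q_2=(0,1)$, $f_{\vec q_i}(\vec z)=(\vec z+\vec q_i)/\beta$, and $S_\beta$ is the attractor of this IFS (the unique nonempty compact set with $S_\beta=\bigcup_i f_{\vec q_i}(S_\beta)$). $\Delta$ is the convex hull of $S_\beta$, the closed triangle with vertices $(0,0)$, $(\frac1{\beta-1},0)$, $(0,\frac1{\beta-1})$. $H=\Delta\setminus\bigcup_{i=0}^2 f_{\vec q_i}(\Delta)$ is the central hole, which equals $\{(x,y):x<\frac1\beta,\ y<\frac1\beta,\ x+y>\frac{1}{\beta(\beta-1)}\}$. A hole of $S_\beta$ means a connected component of $\Delta\setminus S_\beta$. *)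

From HB Require Import structures.
From mathcomp Require Import all_boot all_order all_algebra.
From mathcomp Require Import all_classical all_reals all_analysis.
Set Implicit Arguments. Unset Strict Implicit. Unset Printing Implicit Defensive.
Import Order.TTheory GRing.Theory Num.Theory.
Import numFieldNormedType.Exports.
Local Open Scope classical_set_scope.
Local Open Scope ring_scope.

Definition qvec {R : realType} (i : 'I_3) : R * R :=
  if val i == 0%N then (0, 0) else if val i == 1%N then (1, 0) else (0, 1).

Definition ifs_map {R : realType} (beta : R) (i : 'I_3) (z : R * R) : R * R :=
  ((z.1 + (qvec i).1) / beta, (z.2 + (qvec i).2) / beta).

Definition is_attractor {R : realType} (beta : R) (S : set (R * R)) : Prop :=
  S !=set0 /\ compact S /\ S = \bigcup_(i in [set: 'I_3]) (ifs_map beta i @` S).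

Definition Delta {R : realType} (beta : R) : set (R * R) :=
  [set z | 0 <= z.1 /\ 0 <= z.2 /\ z.1 + z.2 <= (beta - 1)^-1].

Definition central_hole {R : realType} (beta : R) : set (R * R) :=
  Delta beta `\` \bigcup_(i in [set: 'I_3]) (ifs_map beta i @` Delta beta).

Definition is_hole {R : realType} (beta : R) (S C : set (R * R)) : Prop :=
  exists2 x, (Delta beta `\` S) x & C = connected_component (Delta beta `\` S) x.

(* In the coordinates e_0 = 1/(β-1) - x - y, e_1 = x, e_2 = y the triangle Δ is
   {e ≥ 0}, f_i maps e to (e + δ_i)/β, and the hole f_k^n(H) is the set of
   points whose image under f_k^(-n) has all three coordinates below 1/β.
   These sets are open and connected, and two of them are equal or disjoint.
   The heart of the matter is that, for β ≤ β*, every point of Δ outside all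
   of them has an f_j-preimage in Δ outside all of them: if its preimage under
   f_j lies in a hole of f_k, its preimage under f_k cannot also lie in a hole,
   as the two positions would force incompatible inequalities on β.  Following
   such preimages backwards and mapping points of S forwards shows that these
   points are limits of points of S, so Δ \ S is exactly the union of the
   holes, and its components are the holes themselves.  The same approximation
   with S in place of the hole-free points shows S ⊆ Δ.  Finally, a point of a
   hole has at most one coordinate ≥ 1/β, so the points of Δ where e_0 and e_1
   both exceed 1/β lie in S, and they include a nonempty open set. *)

From HB Require Import structures.
From mathcomp Require Import all_boot all_order all_algebra.
From mathcomp Require Import all_classical all_reals all_analysis.
From mathcomp Require Import ring lra.
Import Order.TTheory GRing.Theory Num.Theory.
Import numFieldNormedType.Exports.
Local Open Scope classical_set_scope.
Local Open Scope ring_scope.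

Set Implicit Arguments.
Unset Strict Implicit.
Unset Printing Implicit Defensive.

Lemma ler_cubic {R : realFieldType} (x y : R) :
  x <= y -> x ^+ 3 - 2 * x ^+ 2 + 2 * x <= y ^+ 3 - 2 * y ^+ 2 + 2 * y.
Proof.
move=> xy; have := sqr_ge0 (x + y - 4 / 3); have := sqr_ge0 (x - y).
nra.
Qed.

Lemma iter_can {T : Type} (f g : T -> T) (n : nat) :
  cancel f g -> cancel (iter n f) (iter n g).
Proof. by move=> fK; elim: n => [|n IH] x //; rewrite iterSr iterS fK IH. Qed.

Lemma image_iter_can {T : Type} (f g : T -> T) (n : nat) (A : set T) :
  cancel f g -> cancel g f -> iter n f @` A = iter n g @^-1` A.
Proof.
move=> fK gK; apply/seteqP; split=> [_ [x Ax <-]|y Ay]; first by rewrite /= iter_can.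
by exists (iter n g y); rewrite // iter_can.
Qed.

Lemma continuous_iter {T : topologicalType} (f : T -> T) (n : nat) :
  continuous f -> continuous (iter n f).
Proof.
move=> cf; elim: n => [|n IH] x; first exact: cvg_id.
exact: continuous_comp (IH x) (cf _).
Qed.

Lemma connected_component_open_disjoint {T : topologicalType} (A P Q : set T) (x : T) :
  P x -> P `<=` A -> connected P -> open P -> open Q -> P `&` Q = set0 ->
  A `<=` P `|` Q -> connected_component A x = P.
Proof.
move=> Px PA cP oP oQ PQ0 APQ.
have closure_disj (U V : set T) : open V -> U `&` V = set0 -> closure U `&` V = set0.
  move=> oV UV0; apply/seteqP; split=> // z [Uz Vz].
  have [y UVy] := Uz V (open_nbhs_nbhs (conj oV Vz)).
  by rewrite UV0 in UVy.
have sepPQ : separated P Q.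
  by split; [|rewrite setIC]; apply: closure_disj; rewrite // setIC.
apply/seteqP; split; last exact: connected_component_max.
have [//|CQ] := connected_subset sepPQ
  (subset_trans (@connected_component_sub _ A x) APQ) (@component_connected _ A x).
have : (P `&` Q) x by split => //; apply/CQ/connected_component_refl/PA.
by rewrite PQ0.
Qed.

Lemma convex_connected {R : realType} {V : normedModType R} (A : set V) :
  (forall x y l, A x -> A y -> 0 <= l <= 1 -> A (x + l *: (y - x))) ->
  connected A.
Proof.
move=> convA; have [->|/set0P [x Ax]] := eqVneq A set0; first exact: connected0.
have -> : A = \bigcup_(y in A) [set x + l *: (y - x) | l in `[0, 1]].
  apply/seteqP; split=> [y Ay|_ [y Ay [l l01 <-]]].
    exists y => //; exists 1; first by rewrite /= in_itv /= lexx ler01.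
    by rewrite scale1r addrC subrK.
  by apply: convA => //; move: l01; rewrite /= in_itv.
apply: bigcup_connected.
  exists x => y _; exists 0; first by rewrite /= in_itv /= lexx ler01.
  by rewrite scale0r addr0.
move=> y _; apply: connected_continuous_connected; first exact: segment_connected.
apply: continuous_subspaceT => l; apply: cvgD; first exact: cvg_cst.
by apply: cvgZ; [exact: cvg_id|exact: cvg_cst].
Qed.

Section IFS.
Variables (R : realType) (b : R).
Hypothesis b_gt1 : 1 < b.

Local Notation L := ((b - 1)^-1).
Local Notation s := (b^-1).

Let b_gt0 : 0 < b. Proof. exact: lt_trans ltr01 b_gt1. Qed.
Let b_neq0 : b != 0. Proof. by rewrite gt_eqF. Qed.
Let b1_neq0 : b - 1 != 0. Proof. by rewrite subr_eq0 gt_eqF. Qed.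

Definition ifs_inv (i : 'I_3) (z : R * R) : R * R :=
  (b * z.1 - (qvec i).1, b * z.2 - (qvec i).2).

(* Barycentric coordinates of Delta, scaled to sum to L; bcoord i vanishes on
   the side of Delta opposite to the fixed point of f_i. *)
Definition bcoord (i : 'I_3) (z : R * R) : R :=
  if val i == 0%N then L - z.1 - z.2 else if val i == 1%N then z.1 else z.2.

Lemma ifs_mapK i : cancel (ifs_map b i) (ifs_inv i).
Proof. by case=> x y; rewrite /ifs_inv /ifs_map; congr pair; rewrite /=; field. Qed.

Lemma ifs_invK i : cancel (ifs_inv i) (ifs_map b i).
Proof. by case=> x y; rewrite /ifs_inv /ifs_map; congr pair; rewrite /=; field. Qed.

Lemma ifs_mapE i z : ifs_map b i z = s *: (z + qvec i).
Proof. by congr pair; exact: mulrC. Qed.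

Lemma ifs_invE i z : ifs_inv i z = b *: z - qvec i.
Proof. by []. Qed.

Lemma ifs_map_sub i z w : ifs_map b i z - ifs_map b i w = s *: (z - w).
Proof. by rewrite !ifs_mapE -scalerBr opprD addrACA subrr addr0. Qed.

Lemma continuous_ifs_map i : continuous (ifs_map b i).
Proof.
move=> z; rewrite (funext (ifs_mapE i)).
by apply: cvgZ; [exact: cvg_cst|apply: cvgD; [exact: cvg_id|exact: cvg_cst]].
Qed.

Lemma continuous_ifs_inv i : continuous (ifs_inv i).
Proof.
move=> z; rewrite (funext (ifs_invE i)).
by apply: cvgB; [apply: cvgZ; [exact: cvg_cst|exact: cvg_id]|exact: cvg_cst].
Qed.

Lemma continuous_bcoord j : continuous (bcoord j).
Proof.
case: j => -[|[|[|//]]] ? z; rewrite /bcoord /=.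
- by apply: cvgB; [apply: cvgB; [exact: cvg_cst|exact: cvg_fst]|exact: cvg_snd].
- exact: cvg_fst.
- exact: cvg_snd.
Qed.

Lemma bcoord_ifs_map i j z :
  bcoord j (ifs_map b i z) = (bcoord j z + (j == i)%:R) / b.
Proof.
by case: i => -[|[|[|//]]] ?; case: j => -[|[|[|//]]] ?;
  rewrite /bcoord /ifs_map /qvec /=; field; rewrite ?b_neq0 ?b1_neq0.
Qed.

Lemma bcoord_ifs_inv i j z : bcoord j (ifs_inv i z) = b * bcoord j z - (j == i)%:R.
Proof.
by case: i => -[|[|[|//]]] ?; case: j => -[|[|[|//]]] ?;
  rewrite /bcoord /ifs_inv /qvec /=; field; rewrite ?b_neq0 ?b1_neq0.
Qed.

Lemma bcoord_iter_ifs_inv i j n z :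
  j != i -> bcoord j (iter n (ifs_inv i) z) = b ^+ n * bcoord j z.
Proof.
move=> ji; elim: n => [|n IH] /=; first by rewrite mul1r.
by rewrite bcoord_ifs_inv (negbTE ji) subr0 IH exprS mulrA.
Qed.

Lemma bcoord_iter_ifs_inv_id i n z :
  bcoord i (iter n (ifs_inv i) z) = L - b ^+ n * (L - bcoord i z).
Proof.
elim: n => [|n IH] /=; first by rewrite mul1r subKr.
by rewrite bcoord_ifs_inv eqxx mulr1n IH exprS; field; rewrite ?b_neq0 ?b1_neq0.
Qed.

Lemma bcoord_third j k z : j != k -> exists l, bcoord l z = L - bcoord k z - bcoord j z.
Proof.
case: j => -[|[|[|//]]] ?; case: k => -[|[|[|//]]] ? // _.
- by exists (@Ordinal 3 2 isT); rewrite /bcoord /=; ring.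
- by exists (@Ordinal 3 1 isT); rewrite /bcoord /=; ring.
- by exists (@Ordinal 3 2 isT); rewrite /bcoord /=; ring.
- by exists (@Ordinal 3 0 isT); rewrite /bcoord /=; ring.
- by exists (@Ordinal 3 1 isT); rewrite /bcoord /=; ring.
- by exists (@Ordinal 3 0 isT); rewrite /bcoord /=; ring.
Qed.

Lemma Delta_bcoord z : Delta b z <-> forall j, 0 <= bcoord j z.
Proof.
split=> [[x0 [y0 xy]] /= j|Dz].
  by case: j => -[|[|[|//]]] ? //=; rewrite /bcoord /=; lra.
have := Dz (@Ordinal 3 0 isT); have := Dz (@Ordinal 3 1 isT).
have := Dz (@Ordinal 3 2 isT); rewrite /bcoord /Delta /=; lra.
Qed.

Lemma Delta_ifs_map i z : Delta b z -> Delta b (ifs_map b i z).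
Proof.
move=> /Delta_bcoord Dz; apply/Delta_bcoord => j; rewrite bcoord_ifs_map.
by rewrite divr_ge0 ?addr_ge0 // ltW.
Qed.

Lemma Delta_ifs_inv i z : Delta b z -> Delta b (ifs_inv i z) <-> s <= bcoord i z.
Proof.
move=> /Delta_bcoord Dz; rewrite Delta_bcoord.
have bV : b * s = 1 by rewrite mulfV.
split=> [/(_ i)|ge_i j]; rewrite bcoord_ifs_inv.
  by rewrite eqxx mulr1n subr_ge0 -bV ler_pM2l.
have [->|ji] := eqVneq j i; last by rewrite subr0 mulr_ge0 // ltW.
by rewrite mulr1n subr_ge0 -bV ler_pM2l.
Qed.

Lemma image_ifs_map_Delta i :
  ifs_map b i @` Delta b = Delta b `&` [set z | s <= bcoord i z].
Proof.
apply/seteqP; split=> [_ [w Dw <-]|z [Dz ge_i]].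
  split; first exact: Delta_ifs_map.
  by apply/(Delta_ifs_inv _ (Delta_ifs_map i Dw)); rewrite ifs_mapK.
by exists (ifs_inv i z); [exact/Delta_ifs_inv|exact: ifs_invK].
Qed.

Lemma closed_Delta : closed (Delta b).
Proof.
have -> : Delta b = \bigcap_(j in [set: 'I_3]) (bcoord j @^-1` [set x | 0 <= x]).
  apply/seteqP; split=> [z /Delta_bcoord Dz j _|z Dz]; first exact: Dz.
  by apply/Delta_bcoord => j; exact: Dz.
apply: closed_bigI => j _; apply: preimage_closed; last exact: closed_ge.
by move=> z _; exact: continuous_bcoord.
Qed.

Lemma Delta_norm_le z : Delta b z -> `|z| <= L.
Proof.
move=> [x0 [y0 xy]]; rewrite prod_normE ge_max !ger0_norm //.
by apply/andP; split; lra.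
Qed.

Lemma exists_div_expr_lt (K eps : R) : 0 < eps -> exists m, K / b ^+ m < eps.
Proof.
move=> eps0; have : s ^+ m @[m --> \oo] --> (0 : R).
  by apply: cvg_expr; rewrite gtr0_norm ?invf_lt1 ?invr_gt0.
move=> /cvgr0_norm_lt /(_ (eps / (`|K| + 1))) [].
  by rewrite divr_gt0 // ltr_wpDl.
move=> N _ /(_ N (leqnn N)); rewrite /= normrX gtr0_norm ?invr_gt0 //.
rewrite exprVn ltr_pdivlMr ?ltr_wpDl // => lt_eps; exists N.
apply: le_lt_trans lt_eps; rewrite mulrC ler_wpM2l ?invr_ge0 ?exprn_ge0 ?ltW //.
by have := ler_norm K; lra.
Qed.

Lemma subset_closure_backward_orbit (A B : set (R * R)) (M : R) :
  A !=set0 -> (forall i z, A z -> A (ifs_map b i z)) ->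
  (forall z, B z -> exists j, B (ifs_inv j z)) -> (forall z, B z -> `|z| <= M) ->
  B `<=` closure A.
Proof.
move=> [a Aa] fA gB BM.
have approx m z : B z -> exists2 a', A a' & `|z - a'| <= (M + `|a|) / b ^+ m.
  elim: m z => [|m IH] z Bz.
    exists a => //; rewrite expr0 divr1; apply: le_trans (ler_normB _ _) _.
    by rewrite lerD2r; exact: BM.
  have [j /IH [a' Aa' za']] := gB z Bz.
  exists (ifs_map b j a'); first exact: fA.
  rewrite -{1}(ifs_invK j z) ifs_map_sub normrZ gtr0_norm ?invr_gt0 //.
  by rewrite exprS invfM mulrCA ler_wpM2l // invr_ge0 ltW.
move=> z Bz N /nbhs_ballP [eps /= eps0 epsN].
have [m lt_eps] := exists_div_expr_lt (M + `|a|) eps0.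
have [a' Aa' za'] := approx m z Bz.
exists a'; split => //; apply: epsN; rewrite -ball_normE /ball_ /=.
exact: le_lt_trans za' lt_eps.
Qed.

Section Holes.
Hypotheses (b_gt32 : 3 / 2 < b) (b_small : b ^+ 3 - 2 * b ^+ 2 + 2 * b <= 2).

Lemma b_le_8_5 : b <= 8 / 5.
Proof.
have := b_gt32; have := b_small => ? ?.
rewrite leNgt; apply/negP => b_gt.
have : 0 < (b - 8/5) * (b ^+ 2 - 2/5 * b + 34/25) by apply: mulr_gt0; nra.
have -> : (b - 8/5) * (b ^+ 2 - 2/5 * b + 34/25) =
  b ^+ 3 - 2 * b ^+ 2 + 2 * b - 2 - 22/125 by field.
lra.
Qed.

(* Multiplied by b (b - 1) > 0, these are b^2 <= b + 1, b^3 - 2b^2 - b + 3 >= 0,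
   b^4 - 2b^3 + 3b <= 3 and the defining inequality b^3 - 2b^2 + 2b <= 2. *)
Lemma inv_le_mul_L_sub_2inv : s <= b * (L - 2 * s).
Proof.
have := b_gt32; have := b_le_8_5 => ? ?.
rewrite -subr_ge0 (_ : _ - _ = (- b ^+ 2 + b + 1) / (b * (b - 1))); last first.
  by field; rewrite b_neq0 b1_neq0.
by apply: divr_ge0; nra.
Qed.

Lemma mul_L_sub1_le : b * (L - 1) <= 2 * L - 3 * s.
Proof.
have := b_gt32; have := b_le_8_5 => ? ?.
rewrite -subr_ge0 (_ : _ - _ = (b ^+ 3 - 2 * b ^+ 2 - b + 3) / (b * (b - 1))); last first.
  by field; rewrite b_neq0 b1_neq0.
by apply: divr_ge0; nra.
Qed.

Lemma sqr_mul_L_sub1_ge : 3 * s <= b ^+ 2 * (L - 1).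
Proof.
have := b_gt32; have := b_small => ? ?.
rewrite -subr_ge0 (_ : _ - _ = (- b * (b ^+ 3 - 2 * b ^+ 2 + 2 * b - 2)
                                 + (2 * b - 3) * (b - 1)) / (b * (b - 1))); last first.
  by field; rewrite b_neq0 b1_neq0.
by apply: divr_ge0; nra.
Qed.

Lemma mul_L_sub1_ge : 2 * s <= b * (L - 1).
Proof.
have := b_gt32; have := b_small => ? ?.
rewrite -subr_ge0 (_ : _ - _ = (2 - (b ^+ 3 - 2 * b ^+ 2 + 2 * b)) / (b * (b - 1))); last first.
  by field; rewrite b_neq0 b1_neq0.
by apply: divr_ge0; nra.
Qed.

Lemma twice_inv_lt_L : 2 * s < L.
Proof.
have := inv_le_mul_L_sub_2inv; rewrite -subr_gt0 => le_s.
by rewrite -(pmulr_rgt0 _ b_gt0); apply: lt_le_trans le_s; rewrite invr_gt0.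
Qed.

(* The hole f_k^n(H), written as a preimage under f_k^(-n). *)
Definition hole (k : 'I_3) (n : nat) : set (R * R) :=
  iter n (ifs_inv k) @^-1` [set z | forall j, bcoord j z < s].

Lemma hole0_sub_Delta k : hole k 0 `<=` Delta b.
Proof.
move=> z hz; have := twice_inv_lt_L.
have := hz (@Ordinal 3 0 isT); have := hz (@Ordinal 3 1 isT).
have := hz (@Ordinal 3 2 isT); rewrite /bcoord /Delta /=; lra.
Qed.

Lemma central_holeE k : central_hole b = hole k 0.
Proof.
apply/seteqP; split=> [z [Dz notf] j|z hz].
  rewrite ltNge; apply/negP => ge_j; apply: notf; exists j => //.
  by rewrite image_ifs_map_Delta.
split; first exact: hole0_sub_Delta hz.
by move=> [i _]; rewrite image_ifs_map_Delta => -[_] /=; have := hz i; lra.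
Qed.

Lemma iter_ifs_map_central_hole k n :
  iter n (ifs_map b k) @` central_hole b = hole k n.
Proof.
by rewrite (central_holeE k) (image_iter_can _ _ (ifs_mapK k) (ifs_invK k)).
Qed.

Lemma hole_iter k m n : hole k (m + n) = iter n (ifs_inv k) @^-1` hole k m.
Proof. by apply/seteqP; split=> z; rewrite /hole /= iterD. Qed.

Lemma hole_succ k n : hole k n.+1 = ifs_inv k @^-1` hole k n.
Proof. by rewrite -addn1 hole_iter. Qed.

Lemma hole_sub_Delta k n : hole k n `<=` Delta b.
Proof.
move=> z hz; rewrite -(iter_can n (ifs_invK k) z).
have := @hole0_sub_Delta k (iter n (ifs_inv k) z) hz.
move: (iter n (ifs_inv k) z) => w Dw.
by elim: n {hz} => [//|n IH]; rewrite iterS; apply: Delta_ifs_map.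
Qed.

Lemma hole_bcoord_lt k n z j : hole k n z -> j != k -> bcoord j z < s.
Proof.
move=> hz jk; have := hz j; rewrite bcoord_iter_ifs_inv //.
apply: le_lt_trans; rewrite ler_peMl ?exprn_ege1 ?(ltW b_gt1) //.
by move/Delta_bcoord: (hole_sub_Delta hz).
Qed.

Lemma hole_succ_ge k n z : hole k n.+1 z -> s <= bcoord k z.
Proof.
move=> hz; have Dz := hole_sub_Delta hz; rewrite hole_succ in hz.
exact/(Delta_ifs_inv k Dz)/(hole_sub_Delta hz).
Qed.

Lemma hole_eq_of_meet k n k' n' z : hole k n z -> hole k' n' z -> hole k n = hole k' n'.
Proof.
have hole0_succ k1 k2 m w : hole k1 0 w -> ~ hole k2 m.+1 w.
  by move=> h0 /hole_succ_ge; have := h0 k2; lra.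
wlog le_nn' : k n k' n' z / (n <= n')%N.
  move=> gen h h'; have [le|/ltnW le] := leqP n n'; first exact: gen h h'.
  by apply/esym/(gen _ _ _ _ z).
case: n' le_nn' => [|n'] le hz hz'; first by case: n le {hz}.
case: n le hz => [|n] le hz; first by have := hole0_succ _ _ _ _ hz hz'.
have [kk'|kk'] := eqVneq k k'; last first.
  by move: (hole_bcoord_lt hz' kk'); rewrite ltNge (hole_succ_ge hz).
subst k'.
have [->//|ne_nn'] := eqVneq n n'.
have lt_nn' : (n < n')%N by rewrite ltn_neqAle ne_nn' -ltnS.
have hz0 : hole k 0 (iter n.+1 (ifs_inv k) z) by rewrite -[n.+1]add0n hole_iter in hz.
move: hz'; rewrite (_ : n'.+1 = (n' - n.+1).+1 + n.+1)%N; last by rewrite addSn subnK.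
by rewrite hole_iter => hz'; case: (hole0_succ _ _ _ _ hz0 hz').
Qed.

Definition hole_bounds (t x y : R) := [/\ t * x < s, t * y < s & L - s < t * (x + y)].

Lemma hole_bounds_of_hole k n z j : hole k n z -> j != k ->
  hole_bounds (b ^+ n) (bcoord j z) (L - bcoord k z - bcoord j z).
Proof.
move=> hz jk; have [l el] := bcoord_third (iter n (ifs_inv k) z) jk.
have := hz k; have := hz j; have := hz l.
rewrite el (bcoord_iter_ifs_inv _ _ jk) bcoord_iter_ifs_inv_id.
by split; lra.
Qed.

Lemma hole_bounds_two_levels_absurd n m x y z : x + y + z = L - 1 ->
  hole_bounds (b ^+ n.+1) x y -> hole_bounds (b ^+ m.+1) z y -> False.
Proof.
move=> xyz [nx ny nxy] [mz my mzy].
have := twice_inv_lt_L; have := inv_le_mul_L_sub_2inv => ? ?.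
have lt_absurd p q : (p < q)%N -> L - 2 * s < b ^+ p.+1 * y -> b ^+ q.+1 * y < s -> False.
  move=> pq py qy; have bp0 : 0 < b ^+ p.+1 := exprn_gt0 _ b_gt0.
  have y0 : 0 < y by rewrite -(pmulr_rgt0 _ bp0); lra.
  have : b * (b ^+ p.+1 * y) <= b ^+ q.+1 * y.
    by rewrite mulrA -exprS; apply: ler_wpM2r; [exact: ltW|rewrite ler_eXn2l // ltnS].
  have : b * (L - 2 * s) < b * (b ^+ p.+1 * y) by rewrite ltr_pM2l.
  lra.
(* Distinct levels contradict s <= b (L - 2 s), equal levels the bounds on
   b (L - 1) and b^2 (L - 1). *)
case: (ltngtP n m) => [nm|mn|eq_nm]; first (by apply: lt_absurd nm _ my; lra);
  first by apply: lt_absurd mn _ ny; lra.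
subst m.
have := mul_L_sub1_le; have := sqr_mul_L_sub1_ge; have := mul_L_sub1_ge => ? ? ?.
case: n => [|n] in nx ny nxy mz my mzy *.
  rewrite expr1 in nx ny nxy mz my mzy.
  have : b * (L - 1) = b * (x + y) + b * z by rewrite -xyz; ring.
  lra.
have L1 : 0 <= L - 1.
  rewrite -(pmulr_rge0 _ b_gt0); apply: le_trans mul_L_sub1_ge.
  by rewrite mulr_ge0 // invr_ge0 ltW.
have : b ^+ 2 * (L - 1) <= b ^+ n.+2 * (L - 1) by apply: ler_wpM2r; rewrite // ler_eXn2l.
have : b ^+ n.+2 * (L - 1) = b ^+ n.+2 * x + b ^+ n.+2 * y + b ^+ n.+2 * z.
  by rewrite -xyz; ring.
lra.
Qed.

Lemma hole_ifs_inv_swap_absurd j k n m z : j != k ->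
  hole k n.+1 (ifs_inv j z) -> hole j m.+1 (ifs_inv k z) -> False.
Proof.
move=> jk hj hk; have kj : k != j by rewrite eq_sym.
have := hole_bounds_of_hole hj jk; have := hole_bounds_of_hole hk kj.
rewrite !bcoord_ifs_inv !eqxx (negbTE jk) (negbTE kj) !mulr1n !subr0.
have -> : L - (b * bcoord j z) - (b * bcoord k z - 1) =
          L - b * bcoord k z - (b * bcoord j z - 1) by ring.
move=> bk bj; apply: (hole_bounds_two_levels_absurd _ bj bk); ring.
Qed.

Lemma hole_ifs_inv_bcoord_ge j k n z : j != k ->
  hole k n.+1 (ifs_inv j z) -> s <= bcoord k z.
Proof.
move=> jk hj; have kj : k != j by rewrite eq_sym.
have [] := hole_bounds_of_hole hj jk; rewrite (bcoord_ifs_inv _ k) (negbTE kj) subr0.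
set X := bcoord j _; set Y := _ - X => ltX ltY gtXY.
have := twice_inv_lt_L; have := mul_L_sub1_ge => ? ?.
have s0 : 0 < s by rewrite invr_gt0.
have bn0 : 0 < b ^+ n.+1 := exprn_gt0 _ b_gt0.
have XY0 : 0 < X + Y by rewrite -(pmulr_rgt0 _ bn0); lra.
have le_XY : b * (X + Y) <= b ^+ n.+1 * (X + Y).
  by apply: ler_wpM2r; [exact: ltW|rewrite -{1}(expr1 b) ler_eXn2l].
rewrite leNgt; apply/negP => lt_s.
have lt1 : b * bcoord k z < 1 by rewrite -(mulfV b_neq0) ltr_pM2l.
have XYE : X + Y = L - b * bcoord k z by rewrite /Y; ring.
have : b * (L - 1) < b * (L - b * bcoord k z) by rewrite ltr_pM2l //; lra.
rewrite -XYE; lra.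
Qed.

Definition holes : set (R * R) := [set z | exists k n, hole k n z].

Lemma Delta_setD_holes_ifs_inv z :
  (Delta b `\` holes) z -> exists j, (Delta b `\` holes) (ifs_inv j z).
Proof.
move=> [Dz noh]; have s_lt1 : s < 1 by rewrite invf_lt1.
have [j ge_j] : exists j, s <= bcoord j z.
  apply: contrapT => /forallNP lt_s; apply: noh; exists ord0, 0%N => i.
  by rewrite ltNge; apply/negP/lt_s.
have [[k [n hjz]]|nohj] := pselect (holes (ifs_inv j z)); last first.
  by exists j; split; [exact/(Delta_ifs_inv j Dz)|].
case: n hjz => [|n] hjz.
  by exfalso; apply: noh; exists j, 1%N; rewrite hole_succ.
have [eq_jk|jk] := eqVneq j k.
  by subst k; exfalso; apply: noh; exists j, n.+2; rewrite hole_succ.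
(* Since [ifs_inv j z] lies in a proper hole of f_k, [ifs_inv k z] is hole-free. *)
exists k; split; first exact/(Delta_ifs_inv k Dz)/(hole_ifs_inv_bcoord_ge jk hjz).
move=> [i [m hkz]].
have ge1 : 1 <= bcoord j (ifs_inv k z).
  by rewrite bcoord_ifs_inv (negbTE jk) subr0 -(mulfV b_neq0) ler_pM2l.
have [eq_ji|ji] := eqVneq j i; last first.
  by have := hole_bcoord_lt hkz ji; lra.
subst i; case: m hkz => [|m] hkz; first by have := hkz j; lra.
exact: hole_ifs_inv_swap_absurd jk hjz hkz.
Qed.

Lemma open_hole k n : open (hole k n).
Proof.
apply: open_comp; first by move=> z _; exact: continuous_iter n (@continuous_ifs_inv k) z.
rewrite openE => z lt_s.
apply: (@filter_forall _ _ (fun j x => bcoord j x < s) (nbhs z) _) => j.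
exact: cvgr_lt (@continuous_bcoord j z) _ (lt_s j).
Qed.

Lemma connected_hole k n : connected (hole k n).
Proof.
rewrite -iter_ifs_map_central_hole; apply: connected_continuous_connected.
  rewrite (central_holeE k); apply: convex_connected => x y l hx hy /andP[l0 l1] j.
  have -> : x + l *: (y - x) = (x.1 + l * (y.1 - x.1), x.2 + l * (y.2 - x.2)) by [].
  have -> : bcoord j (x.1 + l * (y.1 - x.1), x.2 + l * (y.2 - x.2)) =
            (1 - l) * bcoord j x + l * bcoord j y.
    by case: j {hx hy} => -[|[|[|//]]] ?; rewrite /bcoord /=; ring.
  have := hx j; have := hy j.
  by have [|] := lerP (bcoord j x) (bcoord j y); nra.
by apply: continuous_subspaceT; exact: continuous_iter n (@continuous_ifs_map k).
Qed.

Section Attractor.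
Variable S : set (R * R).
Hypothesis S_attr : is_attractor b S.

Lemma attractor_ifs_inv z : S z -> exists j, S (ifs_inv j z).
Proof.
have [_ [_ SE]] := S_attr; rewrite {1}SE => -[j _ [w Sw <-]].
by exists j; rewrite ifs_mapK.
Qed.

Lemma attractor_ifs_map i z : S z -> S (ifs_map b i z).
Proof. by have [_ [_ SE]] := S_attr => Sz; rewrite SE; exists i => //; exists z. Qed.

Lemma attractor_sub_Delta : S `<=` Delta b.
Proof.
have [_ [cS _]] := S_attr; have [M [_ SM]] := compact_bounded cS.
move=> z Sz; apply: closed_Delta.
apply: (@subset_closure_backward_orbit _ _ (M + 1)) Sz.
- by exists 0; do 2?split => //=; rewrite addr0 invr_ge0 subr_ge0 ltW.
- exact: Delta_ifs_map.
- exact: attractor_ifs_inv.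
- by move=> w Sw; apply: (SM (M + 1)) => //; rewrite ltrDl.
Qed.

Lemma attractor_hole_disjoint k n z : hole k n z -> ~ S z.
Proof.
elim: n z => [|n IH] z hz Sz; have [i Si] := attractor_ifs_inv Sz.
all: have := (Delta_ifs_inv i (attractor_sub_Delta Sz)).1 (attractor_sub_Delta Si).
  by have := hz i; lra.
have [eq_ik|ik] := eqVneq i k.
  by subst i; rewrite hole_succ in hz; have := IH _ hz Si.
by have := hole_bcoord_lt hz ik; lra.
Qed.

Lemma Delta_setD_holes_sub_attractor : Delta b `\` holes `<=` S.
Proof.
have [[a Sa] [cS _]] := S_attr.
move=> z hz; apply: (compact_closed _ cS); first exact: norm_hausdorff.
apply: (@subset_closure_backward_orbit _ _ L) hz.
- by exists a.
- exact: attractor_ifs_map.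
- exact: Delta_setD_holes_ifs_inv.
- by move=> w [Dw _]; exact: Delta_norm_le.
Qed.

Lemma Delta_setD_attractor : Delta b `\` S = holes.
Proof.
apply/seteqP; split=> [z [Dz nSz]|z [k [n hz]]].
  by apply: contrapT => nh; apply/nSz/Delta_setD_holes_sub_attractor.
by split; [exact: hole_sub_Delta hz|exact: attractor_hole_disjoint hz].
Qed.

Lemma is_hole_eq_hole C : is_hole b S C -> exists k n, C = hole k n.
Proof.
move=> [x Dx ->]; move: (Dx); rewrite Delta_setD_attractor => -[k [n hx]].
exists k, n.
pose Q := \bigcup_(kn in [set kn | hole kn.1 kn.2 <> hole k n]) hole kn.1 kn.2.
apply: (@connected_component_open_disjoint _ _ (hole k n) Q x hx);
  rewrite ?Delta_setD_attractor; [|exact: connected_hole|exact: open_hole| | |].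
- by move=> z hz; exists k, n.
- by apply: bigcup_open => kn _; exact: open_hole.
- apply/seteqP; split=> // z [hz [[k' n'] /= ne hz']].
  by apply: ne; exact: hole_eq_of_meet hz' hz.
- move=> z [k' [n' hz']].
  have [eq|ne] := pselect (hole k' n' = hole k n); first by left; rewrite -eq.
  by right; exists (k', n').
Qed.

Lemma attractor_interior_neq0 : interior S !=set0.
Proof.
pose d := (L - 2 * s) / 4.
have := twice_inv_lt_L => ?; have s0 : 0 < s by rewrite invr_gt0.
have d0 : 0 < d by rewrite /d; lra.
have Ld : L = 4 * d + 2 * s by rewrite /d; lra.
pose i0 : 'I_3 := Ordinal (isT : 0 < 3)%N; pose i1 : 'I_3 := Ordinal (isT : 1 < 3)%N.
pose i2 : 'I_3 := Ordinal (isT : 2 < 3)%N.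
exists (s + d, d); rewrite /interior /=; near=> w.
apply: Delta_setD_holes_sub_attractor.
have w0 : s < bcoord i0 w.
  by near: w; apply: cvgr_gt (@continuous_bcoord i0 _) _ _; rewrite /bcoord /=; lra.
have w1 : s < bcoord i1 w.
  by near: w; apply: cvgr_gt (@continuous_bcoord i1 _) _ _; rewrite /bcoord /=; lra.
have w2 : 0 < bcoord i2 w.
  by near: w; apply: cvgr_gt (@continuous_bcoord i2 _) _ _; rewrite /bcoord /=; lra.
split.
  by apply/Delta_bcoord => -[[|[|[|//]]] ?]; rewrite /bcoord /= in w0 w1 w2 *; lra.
move=> [k [n hw]]; have [k0|k0] := eqVneq i0 k; last first.
  by have := hole_bcoord_lt hw k0; lra.
by rewrite -k0 in hw; have := hole_bcoord_lt hw (isT : i1 != i0); lra.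
Unshelve. all: by end_near.
Qed.

End Attractor.
End Holes.
End IFS.

Theorem proposition6p2 (R : realType) (betastar beta : R) (S : set (R * R)) :
  betastar ^+ 3 - 2 * betastar ^+ 2 + 2 * betastar = 2 ->
  3 / 2 < beta -> beta <= betastar ->
  is_attractor beta S ->
  interior S !=set0 /\
  (forall C, is_hole beta S C ->
     exists (i : 'I_3) (n : nat), C = (iter n (ifs_map beta i)) @` (central_hole beta)).
Proof.
move=> star b_gt32 le_star S_attr.
have b_small : beta ^+ 3 - 2 * beta ^+ 2 + 2 * beta <= 2.
  by rewrite -[leRHS]star; exact: ler_cubic.
have b_gt1 : 1 < beta by lra.
split; first exact (attractor_interior_neq0 b_gt1 b_gt32 b_small S_attr).
move=> C /(is_hole_eq_hole b_gt1 b_gt32 b_small S_attr) [k [n ->]].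
by exists k, n; rewrite iter_ifs_map_central_hole.
Qed.
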